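(* For any Poisson $H$-pseudoalgebra $V$ and $a_1,\dots,a_m,b_1,\dots,b_n\in V$, $[(a_1\cdots a_m)*(b_1\cdots b_n)]=\sum_{i=1}^m\sum_{j=1}^n\epsilon_{ij}\,(a_1\cdots a_{i-1}a_{i+1}\cdots a_m)\,[a_i*b_j]\,(b_1\cdots b_{j-1}b_{j+1}\cdots b_n)$, where $\epsilon_{ij}=(-1)^{p(a_i)(p(a_{i+1})+\dots+p(a_m))+p(b_j)(p(b_1)+\dots+p(b_{j-1}))}$.
   Context: $H$ is a cocommutative Hopf algebra over a field $\mathbb F$ of characteristic $0$ (purely even), coproduct $\Delta(h)=h_{(1)}\otimes h_{(2)}$, antipode $S$, $h_{(1)}\otimes h_{(-2)}:=(\mathrm{id}\otimes S)\Delta(h)$. $(H\otimes H)\otimes_HV$ is the quotient of $H\otimes H\otimes V$ by $(fh_{(1)}\otimes gh_{(2)})\otimes e=(f\otimes g)\otimes he$. A Poisson $H$-pseudoalgebra is a vector superspace $V$ (parity $p$) with a left $H$-module structure, an even supercommutative associative product with $h(ab)=(h_{(1)}a)(h_{(2)}b)$, and an even pseudobracket $[a*b]\in(H\otimes H)\otimes_HV$ making $V$ a Lie $H$-pseudoalgebra ($H$-bilinearity $[fa*gb]=((f\otimes g)\otimes_H1)[a*b]$, skewsymmetry and Jacobi identity) and satisfying $[a*bc]=[a*b]c+(-1)^{p(b)p(c)}[a*c]b$. For $a,c\in V$ and $B=(f\otimes g)\otimes_Hb$, the products are $aB:=(f_{(1)}\otimes g)\otimes_H(f_{(-2)}a)b$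 and $Bc:=(f\otimes g_{(1)})\otimes_Hb(g_{(-2)}c)$, extended linearly; they are well defined and satisfy $(aB)c=a(Bc)$, which gives meaning to the triple products in the claim (empty products of elements of $V$ being omitted). *)

From HB Require Import structures.
From mathcomp Require Import all_boot all_order all_algebra.
Set Implicit Arguments. Unset Strict Implicit. Unset Printing Implicit Defensive.
Import GRing.Theory.
Local Open Scope ring_scope.

(* Tensor products are encoded by formal sums (lists of pure tensors).      *)
(* Two formal sums are equal in the tensor product (or in a quotient of it  *)
(* such as (H ⊗ H) ⊗_H V) iff every multilinear (and, for ⊗_H, balanced)   *)
(* map into an arbitrary F-vector space W gives the same value on them      *)
(* (universal property of the tensor product / of the quotient).            *)
(* Scalar coefficients are absorbed into one tensor factor.                 *)

Section Defs.
Variable F : fieldType.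

Definition lin1 (A W : lmodType F) (f : A -> W) :=
  forall (c : F) (x y : A), f (c *: x + y) = c *: f x + f y.

Definition bilin (A B W : lmodType F) (phi : A -> B -> W) :=
  (forall y, lin1 (fun x => phi x y)) /\ (forall x, lin1 (phi x)).

Definition trilin (A B C W : lmodType F) (phi : A -> B -> C -> W) :=
  [/\ forall y z, lin1 (fun x => phi x y z),
      forall x z, lin1 (fun y => phi x y z) &
      forall x y, lin1 (phi x y)].

Definition quadlin (A B C D W : lmodType F) (phi : A -> B -> C -> D -> W) :=
  [/\ forall y z t, lin1 (fun x => phi x y z t),
      forall x z t, lin1 (fun y => phi x y z t),
      forall x y t, lin1 (fun z => phi x y z t) &
      forall x y z, lin1 (phi x y z)].

Definition eqT2 (H : lmodType F) (s t : seq (H * H)) :=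
  forall (W : lmodType F) (phi : H -> H -> W), bilin phi ->
    \sum_(x <- s) phi x.1 x.2 = \sum_(x <- t) phi x.1 x.2.

Definition eqT3 (H : lmodType F) (s t : seq (H * H * H)) :=
  forall (W : lmodType F) (phi : H -> H -> H -> W), trilin phi ->
    \sum_(x <- s) phi x.1.1 x.1.2 x.2 = \sum_(x <- t) phi x.1.1 x.1.2 x.2.

(* Cocommutative Hopf algebra over F; cop h is a representative of Δ(h)
   (Sweedler: h_(1) ⊗ h_(2) = sum of the pairs in cop h). *)
Record cocomm_hopf (H : algType F) := CocommHopf {
  cop : H -> seq (H * H);
  cou : H -> F;
  ant : H -> H;
  cop_add : forall h k, eqT2 (cop (h + k)) (cop h ++ cop k);
  cop_scale : forall (c : F) h, eqT2 (cop (c *: h)) [seq (c *: x.1, x.2) | x <- cop h];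
  cop_coassoc : forall h,
    eqT3 [seq (y.1, y.2, x.2) | x <- cop h, y <- cop x.1]
         [seq (x.1, y.1, y.2) | x <- cop h, y <- cop x.2];
  cou_lin : forall (c : F) h k, cou (c *: h + k) = c * cou h + cou k;
  cou_l : forall h, \sum_(x <- cop h) cou x.1 *: x.2 = h;
  cou_r : forall h, \sum_(x <- cop h) cou x.2 *: x.1 = h;
  cop_mul : forall h k, eqT2 (cop (h * k)) [seq (x.1 * y.1, x.2 * y.2) | x <- cop h, y <- cop k];
  cop_one : eqT2 (cop 1) [:: (1, 1)];
  cou_mul : forall h k, cou (h * k) = cou h * cou k;
  cou_one : cou 1 = 1;
  ant_lin : forall (c : F) h k, ant (c *: h + k) = c *: ant h + ant k;
  ant_l : forall h, \sum_(x <- cop h) ant x.1 * x.2 = cou h *: 1;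
  ant_r : forall h, \sum_(x <- cop h) x.1 * ant x.2 = cou h *: 1;
  cop_cocomm : forall h, eqT2 (cop h) [seq (x.2, x.1) | x <- cop h]
}.

Section Pseudo.
Variables (H : algType F) (Hh : cocomm_hopf H) (V : lmodType F).

(* elements of (H ⊗ H) ⊗_H V and of H^{⊗3} ⊗_H V, as formal sums *)
Definition PB := seq (H * H * V).
Definition PB3 := seq (H * H * H * V).

Definition balanced2 (act : H -> V -> V) (W : lmodType F) (phi : H -> H -> V -> W) :=
  forall f g h e, \sum_(x <- cop Hh h) phi (f * x.1) (g * x.2) e = phi f g (act h e).

Definition balanced3 (act : H -> V -> V) (W : lmodType F) (phi : H -> H -> H -> V -> W) :=
  forall f g k h e,
    \sum_(x <- [seq (y.1, y.2, x.2) | x <- cop Hh h, y <- cop Hh x.1])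
       phi (f * x.1.1) (g * x.1.2) (k * x.2) e = phi f g k (act h e).

Definition eqPB (act : H -> V -> V) (s t : PB) :=
  forall (W : lmodType F) (phi : H -> H -> V -> W), trilin phi -> balanced2 act phi ->
    \sum_(x <- s) phi x.1.1 x.1.2 x.2 = \sum_(x <- t) phi x.1.1 x.1.2 x.2.

Definition eqPB3 (act : H -> V -> V) (s t : PB3) :=
  forall (W : lmodType F) (phi : H -> H -> H -> V -> W), quadlin phi -> balanced3 act phi ->
    \sum_(x <- s) phi x.1.1.1 x.1.1.2 x.1.2 x.2 = \sum_(x <- t) phi x.1.1.1 x.1.1.2 x.1.2 x.2.

Definition scalePB (c : F) (B : PB) : PB := [seq (x.1, c *: x.2) | x <- B].
Definition scalePB3 (c : F) (B : PB3) : PB3 := [seq (x.1, c *: x.2) | x <- B].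

Definition mulPBr (act : H -> V -> V) (vmul : V -> V -> V) (B : PB) (c : V) : PB :=
  [seq (x.1.1, y.1, vmul x.2 (act (ant Hh y.2) c)) | x <- B, y <- cop Hh x.1.2].
Definition mulPBl (act : H -> V -> V) (vmul : V -> V -> V) (a : V) (B : PB) : PB :=
  [seq (y.1, x.1.2, vmul (act (ant Hh y.2) a) x.2) | x <- B, y <- cop Hh x.1.1].

(* [a * [b * c]] : if [b*c] = Σ (f⊗g)⊗_H d and [a*d] = Σ (h⊗k)⊗_H e then
   [a*[b*c]] = Σ (h ⊗ f k_(1) ⊗ g k_(2)) ⊗_H e *)
Definition brL (br : V -> V -> PB) (a b c : V) : PB3 :=
  flatten [seq [seq (y.1.1, x.1.1 * z.1, x.1.2 * z.2, y.2) | y <- br a x.2, z <- cop Hh y.1.2]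
          | x <- br b c].
(* [[a * b] * c] : if [a*b] = Σ (f⊗g)⊗_H d and [d*c] = Σ (h⊗k)⊗_H e then
   [[a*b]*c] = Σ (f h_(1) ⊗ g h_(2) ⊗ k) ⊗_H e *)
Definition brR (br : V -> V -> PB) (a b c : V) : PB3 :=
  flatten [seq [seq (x.1.1 * z.1, x.1.2 * z.2, y.1.2, y.2) | y <- br x.2 c, z <- cop Hh y.1.1]
          | x <- br a b].
Definition swap12 (B : PB3) : PB3 := [seq (x.1.1.2, x.1.1.1, x.1.2, x.2) | x <- B].

Definition sgn (p q : bool) : F := (-1) ^+ (p && q).

(* Poisson H-pseudoalgebra: vpar p v means v is homogeneous of parity p. *)
Record poisson_pseudoalg := PoissonPseudoalg {
  act : H -> V -> V;
  vpar : bool -> V -> Prop;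
  vmul : V -> V -> V;
  pbr : V -> V -> PB;
  act_linl : forall (c : F) h k v, act (c *: h + k) v = c *: act h v + act k v;
  act_linr : forall h, lin1 (act h);
  act_mul : forall h k v, act (h * k) v = act h (act k v);
  act_one : forall v, act 1 v = v;
  vpar0 : forall p, vpar p 0;
  vparD : forall p v w, vpar p v -> vpar p w -> vpar p (v + w);
  vparZ : forall p (c : F) v, vpar p v -> vpar p (c *: v);
  vpar_dec : forall v, exists v0 v1, [/\ vpar false v0, vpar true v1 & v = v0 + v1];
  vpar_disj : forall v, vpar false v -> vpar true v -> v = 0;
  act_par : forall p h v, vpar p v -> vpar p (act h v);
  vmul_linl : forall b, lin1 (fun a => vmul a b);
  vmul_linr : forall a, lin1 (vmul a);
  vmulA : forall a b c, vmul a (vmul b c) = vmul (vmul a b) c;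
  vmul_par : forall p q a b, vpar p a -> vpar q b -> vpar (p (+) q) (vmul a b);
  vmul_scomm : forall p q a b, vpar p a -> vpar q b -> vmul a b = sgn p q *: vmul b a;
  act_vmul : forall h a b,
    act h (vmul a b) = \sum_(x <- cop Hh h) vmul (act x.1 a) (act x.2 b);
  pbr_linl : forall (c : F) a a' b,
    eqPB act (pbr (c *: a + a') b) (scalePB c (pbr a b) ++ pbr a' b);
  pbr_linr : forall (c : F) a b b',
    eqPB act (pbr a (c *: b + b')) (scalePB c (pbr a b) ++ pbr a b');
  pbr_par : forall p q a b, vpar p a -> vpar q b ->
    exists s : PB, eqPB act (pbr a b) s /\ (forall x, x \in s -> vpar (p (+) q) x.2);
  pbr_Hbil : forall f g a b,
    eqPB act (pbr (act f a) (act g b)) [seq (f * x.1.1, g * x.1.2, x.2) | x <- pbr a b];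
  pbr_skew : forall p q a b, vpar p a -> vpar q b ->
    eqPB act (pbr b a) [seq (x.1.2, x.1.1, (- sgn p q) *: x.2) | x <- pbr a b];
  pbr_jacobi : forall p q a b c, vpar p a -> vpar q b ->
    eqPB3 act (brL pbr a b c ++ scalePB3 (- sgn p q) (swap12 (brL pbr b a c)))
              (brR pbr a b c);
  pbr_leibniz : forall p q a b c, vpar p b -> vpar q c ->
    eqPB act (pbr a (vmul b c))
      (mulPBr act vmul (pbr a b) c ++ scalePB (sgn p q) (mulPBr act vmul (pbr a c) b))
}.

Variable P : poisson_pseudoalg.

(* product of a list of elements of V (None for the empty product) *)
Definition lprod (r : seq V) : option V :=
  if r is x :: s then Some (foldl (vmul P) x s) else None.

Definition omulPBl (o : option V) (B : PB) : PB :=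
  if o is Some a then mulPBl (act P) (vmul P) a B else B.
Definition omulPBr (B : PB) (o : option V) : PB :=
  if o is Some c then mulPBr (act P) (vmul P) B c else B.

Definition prodI (m : nat) (a : 'I_m -> V) : V := odflt 0 (lprod [seq a i | i <- enum 'I_m]).

Definition eps_ij (m n : nat) (pa : 'I_m -> bool) (pb : 'I_n -> bool) (i : 'I_m) (j : 'I_n) : F :=
  (-1) ^+ (pa i * (\sum_(k < m | (i < k)%N) pa k) + pb j * (\sum_(k < n | (k < j)%N) pb k))%N.

Definition rhs49 (m n : nat) (a : 'I_m -> V) (pa : 'I_m -> bool)
    (b : 'I_n -> V) (pb : 'I_n -> bool) : PB :=
  flatten [seq scalePB (eps_ij pa pb i j)
             (omulPBr (omulPBl (lprod [seq a k | k <- enum 'I_m & k != i]) (pbr P (a i) (b j)))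
                      (lprod [seq b k | k <- enum 'I_n & k != j]))
          | i <- enum 'I_m, j <- enum 'I_n].

End Pseudo.
End Defs.

(* Both sides are compared on every balanced trilinear form on (H ⊗ H) ⊗_H V.
   Pulling such a form back along B |-> B c gives again a balanced form (this
   uses that the antipode is anti-multiplicative), so the products of
   pseudobrackets with elements are well defined.  Cocommutativity gives
   S(k)(c c') = S(k_1)c S(k_2)c', whence (B c) c' = B (c c').  The Leibniz
   rule and induction then expand [x * b_1...b_n] along the b_j;
   skew-symmetry, applied to the whole product and to each [a_i * y], turns
   this into the expansion of [a_1...a_m * y], the extra signs coming from
   supercommutativity.  Neither the Jacobi identity nor the characteristic of
   F plays a role. *)

From HB Require Import structures.
From mathcomp Require Import all_boot all_order all_algebra zify.
Set Implicit Arguments. Unset Strict Implicit. Unset Printing Implicit Defensive.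
Import GRing.Theory.
Local Open Scope ring_scope.

Section Linearity.
Variable F : fieldType.
Implicit Types A B W : lmodType F.

Lemma lin1_0 A W (f : A -> W) : lin1 f -> f 0 = 0.
Proof.
move=> lin_f; have := lin_f 1 0 0; rewrite !scale1r addr0 => /eqP.
by rewrite -subr_eq addrN => /eqP.
Qed.

Lemma lin1D A W (f : A -> W) x y : lin1 f -> f (x + y) = f x + f y.
Proof. by move=> lin_f; have := lin_f 1 x y; rewrite !scale1r. Qed.

Lemma lin1Z A W (f : A -> W) c x : lin1 f -> f (c *: x) = c *: f x.
Proof. by move=> lin_f; have := lin_f c x 0; rewrite !addr0 (lin1_0 lin_f) addr0. Qed.

Lemma lin1_sum A W (f : A -> W) I (r : seq I) (G : I -> A) :
  lin1 f -> f (\sum_(i <- r) G i) = \sum_(i <- r) f (G i).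
Proof.
move=> lin_f; elim: r => [|i r IHr]; first by rewrite !big_nil lin1_0.
by rewrite !big_cons lin1D // IHr.
Qed.

Lemma lin1_id A : lin1 (fun x : A => x).
Proof. by []. Qed.

Lemma lin1_comp A B W (f : B -> W) (g : A -> B) :
  lin1 f -> lin1 g -> lin1 (fun x => f (g x)).
Proof. by move=> lin_f lin_g c x y; rewrite lin_g lin_f. Qed.

Lemma lin1_addfun A W (f g : A -> W) : lin1 f -> lin1 g -> lin1 (fun x => f x + g x).
Proof. by move=> lin_f lin_g c x y; rewrite lin_f lin_g scalerDr addrACA. Qed.

Lemma lin1_scalefun A W (f : A -> W) k : lin1 f -> lin1 (fun x => k *: f x).
Proof. by move=> lin_f c x y; rewrite lin_f scalerDr !scalerA mulrC. Qed.

Lemma lin1_sumfun A W I (r : seq I) (G : A -> I -> W) :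
  (forall i, lin1 (G^~ i)) -> lin1 (fun x => \sum_(i <- r) G x i).
Proof.
move=> lin_G c x y; rewrite scaler_sumr -big_split /=.
by apply: eq_bigr => i _; rewrite lin_G.
Qed.

Lemma lin1_scaler A k : lin1 (fun x : A => k *: x).
Proof. exact: lin1_scalefun (@lin1_id A). Qed.

End Linearity.

Section CoproductSums.
Variables (F : fieldType) (H : algType F) (Hh : cocomm_hopf H).
Local Notation cop := (cop Hh).
Local Notation cou := (cou Hh).
Local Notation ant := (ant Hh).
Implicit Types A W : lmodType F.

Lemma eqT2_sum W (G : H * H -> W) s t : eqT2 s t -> bilin (fun u v => G (u, v)) ->
  \sum_(z <- s) G z = \sum_(z <- t) G z.
Proof.
have uncurry r : \sum_(z <- r) G z = \sum_(z <- r) G (z.1, z.2) by apply: eq_bigr => -[].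
by move=> eq_st bil_G; rewrite !uncurry; exact: (eq_st W (fun u v => G (u, v))).
Qed.

Lemma eqT3_sum W (G : H * H * H -> W) s t : eqT3 s t -> trilin (fun u v w => G (u, v, w)) ->
  \sum_(z <- s) G z = \sum_(z <- t) G z.
Proof.
have uncurry r : \sum_(z <- r) G z = \sum_(z <- r) G (z.1.1, z.1.2, z.2).
  by apply: eq_bigr => -[[]].
by move=> eq_st tril_G; rewrite !uncurry; exact: (eq_st W (fun u v w => G (u, v, w))).
Qed.

Lemma big_cop_lin W (G : H * H -> W) c h k : bilin (fun u v => G (u, v)) ->
  \sum_(z <- cop (c *: h + k)) G z = c *: \sum_(z <- cop h) G z + \sum_(z <- cop k) G z.
Proof.
move=> bil_G; rewrite (eqT2_sum (cop_add Hh _ _) bil_G) big_cat /=; congr (_ + _).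
rewrite (eqT2_sum (cop_scale Hh _ _) bil_G) big_map scaler_sumr.
by apply: eq_bigr => -[x y] _ /=; rewrite (lin1Z _ _ (bil_G.1 y)).
Qed.

Lemma lin1_big_cop A W (g : A -> H) (G : H * H -> W) :
  bilin (fun u v => G (u, v)) -> lin1 g -> lin1 (fun x => \sum_(z <- cop (g x)) G z).
Proof. by move=> bil_G lin_g c x y; rewrite lin_g big_cop_lin. Qed.

Lemma big_cop_sum W (G : H * H -> W) I (r : seq I) (K : I -> H) :
  bilin (fun u v => G (u, v)) ->
  \sum_(z <- cop (\sum_(i <- r) K i)) G z = \sum_(i <- r) \sum_(z <- cop (K i)) G z.
Proof. by move=> bil_G; rewrite (lin1_sum _ _ (lin1_big_cop bil_G (@lin1_id _ _))). Qed.

Lemma big_cop_scale W (G : H * H -> W) c h : bilin (fun u v => G (u, v)) ->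
  \sum_(z <- cop (c *: h)) G z = c *: \sum_(z <- cop h) G z.
Proof. by move=> bil_G; rewrite (lin1Z _ _ (lin1_big_cop bil_G (@lin1_id _ _))). Qed.

Lemma big_cop_coassoc W (G : H * H * H -> W) h : trilin (fun u v w => G (u, v, w)) ->
  \sum_(x <- cop h) \sum_(y <- cop x.1) G (y.1, y.2, x.2) =
  \sum_(x <- cop h) \sum_(y <- cop x.2) G (x.1, y.1, y.2).
Proof.
by move=> tril_G; have := eqT3_sum (cop_coassoc Hh h) tril_G; rewrite !big_allpairs_dep.
Qed.

Lemma big_cop_cocomm W (G : H * H -> W) h : bilin (fun u v => G (u, v)) ->
  \sum_(x <- cop h) G x = \sum_(x <- cop h) G (x.2, x.1).
Proof. by move=> bil_G; rewrite (eqT2_sum (cop_cocomm Hh h) bil_G) big_map. Qed.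

Lemma big_cop_mul W (G : H * H -> W) h k : bilin (fun u v => G (u, v)) ->
  \sum_(z <- cop (h * k)) G z = \sum_(x <- cop h) \sum_(y <- cop k) G (x.1 * y.1, x.2 * y.2).
Proof. by move=> bil_G; rewrite (eqT2_sum (cop_mul Hh h k) bil_G) big_allpairs_dep. Qed.

Lemma lin1_mull k : lin1 (fun y : H => k * y).
Proof. by move=> c x y; rewrite mulrDr scalerAr. Qed.

Lemma lin1_mulr k : lin1 (fun y : H => y * k).
Proof. by move=> c x y; rewrite mulrDl scalerAl. Qed.

Lemma lin1_ant : lin1 ant.
Proof. exact: ant_lin. Qed.

Lemma lin1_cou W (w : W) A (g : A -> H) : lin1 g -> lin1 (fun x => cou (g x) *: w).
Proof. by move=> lin_g c x y; rewrite lin_g cou_lin scalerDl scalerA. Qed.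

End CoproductSums.

Create HintDb lin1db.
#[export] Hint Resolve lin1_mull lin1_mulr lin1_ant lin1_id lin1_scaler : lin1db.

(* Proves [lin1 f] by following the syntax of [f]; the leaves are closed by
   the hints of [lin1db]. *)
Ltac lin :=
  cbn [fst snd];
  match goal with
  | |- lin1 (fun x => \sum_(z <- cop _ (@?g x)) @?G z) =>
       refine (@lin1_big_cop _ _ _ _ _ g G _ _); [bil | lin]
  | |- lin1 (fun x => \sum_(i <- ?r) @?G x i) =>
       refine (@lin1_sumfun _ _ _ _ r G _) => ?; lin
  | |- lin1 (fun x => cou _ (@?g x) *: ?w) => refine (@lin1_cou _ _ _ _ w _ g _); lin
  | |- lin1 (fun x => ?k *: @?g x) => refine (@lin1_scalefun _ _ _ g k _); lin
  | |- lin1 (fun x => @?f x + @?g x) => refine (@lin1_addfun _ _ _ f g _ _); lin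
  | |- lin1 (fun x => ?f (@?g x)) =>
       refine (@lin1_comp _ _ _ _ f g _ _); [solve [eauto with lin1db] | lin]
  | |- lin1 (fun x => ?f (@?g x) ?c) =>
       refine (@lin1_comp _ _ _ _ (fun y => f y c) g _ _); [solve [eauto with lin1db] | lin]
  | |- lin1 (fun x => ?f (@?g x) ?c ?d) =>
       refine (@lin1_comp _ _ _ _ (fun y => f y c d) g _ _); [solve [eauto with lin1db] | lin]
  | |- lin1 ?f => solve [eauto with lin1db]
  end
with bil := split => ?; lin
with tril := split => ? ?; lin.

Section Antipode.
Variables (F : fieldType) (H : algType F) (Hh : cocomm_hopf H).
Local Notation cop := (cop Hh).
Local Notation cou := (cou Hh).
Local Notation ant := (ant Hh).

Lemma big_ant_l h L R : \sum_(c <- cop h) L * (ant c.1 * c.2) * R = cou h *: (L * R).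
Proof. by rewrite -mulr_suml -mulr_sumr ant_l -scalerAr mulr1 -scalerAl. Qed.

Lemma big_ant_r h L R : \sum_(c <- cop h) L * (c.1 * ant c.2) * R = cou h *: (L * R).
Proof. by rewrite -mulr_suml -mulr_sumr ant_r -scalerAr mulr1 -scalerAl. Qed.

(* The usual convolution argument: [ant (x y)] is rewritten as
   [ant y_1 ant x_1 x_2 y_2 ant (x_3 y_3)] and collapsed the other way. *)
Lemma ant_mul x y : ant (x * y) = ant y * ant x.
Proof.
have counit_split : ant (x * y) =
    \sum_(a <- cop x) \sum_(b <- cop y) (cou a.1 * cou b.1) *: ant (a.2 * b.2).
  rewrite -{1}(cou_l Hh (x * y)) (lin1_sum _ _ (lin1_ant Hh)) big_cop_mul; last by bil.
  apply: eq_bigr => a _; apply: eq_bigr => b _ /=.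
  by rewrite (lin1Z _ _ (lin1_ant Hh)) cou_mul.
pose T := \sum_(a <- cop x) \sum_(c <- cop a.1) \sum_(b <- cop y) \sum_(d <- cop b.1)
   ant d.1 * (ant c.1 * c.2) * (d.2 * ant (a.2 * b.2)).
have counit_as_ant : ant (x * y) = T.
  rewrite counit_split /T; apply: eq_bigr => a _.
  rewrite exchange_big /=; apply: eq_bigr => b _; rewrite exchange_big /=.
  under eq_bigr => c _ do rewrite big_ant_l.
  rewrite -scaler_sumr -scalerA; congr (_ *: _).
  under eq_bigr => d _ do rewrite mulrA -[ant d.1 * d.2]mul1r.
  by rewrite big_ant_l mul1r.
have reassoc : T = \sum_(a <- cop x) \sum_(c <- cop a.2) \sum_(b <- cop y) \sum_(d <- cop b.2)
    ant b.1 * (ant a.1 * c.1) * (d.1 * ant (c.2 * d.2)).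
  rewrite /T (big_cop_coassoc Hh (G := fun t => \sum_(b <- cop y) \sum_(d <- cop b.1)
     ant d.1 * (ant t.1.1 * t.1.2) * (d.2 * ant (t.2 * b.2)))); last by tril.
  apply: eq_bigr => a _; apply: eq_bigr => c _ /=.
  by rewrite (big_cop_coassoc Hh (G := fun t =>
    ant t.1.1 * (ant a.1 * c.1) * (t.1.2 * ant (c.2 * t.2)))) //; tril.
have collapse (a b : H * H) : \sum_(c <- cop a.2) \sum_(d <- cop b.2)
    ant b.1 * (ant a.1 * c.1) * (d.1 * ant (c.2 * d.2)) =
    (cou a.2 * cou b.2) *: (ant b.1 * ant a.1).
  transitivity (\sum_(w <- cop (a.2 * b.2)) (ant b.1 * ant a.1) * (w.1 * ant w.2) * 1).
    rewrite (big_cop_mul Hh (G := fun w => (ant b.1 * ant a.1) * (w.1 * ant w.2) * 1)); last by bil.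
    by apply: eq_bigr => c _; apply: eq_bigr => d _ /=; rewrite mulr1 !mulrA.
  by rewrite big_ant_r cou_mul mulr1.
rewrite counit_as_ant reassoc.
under eq_bigr => a _ do rewrite exchange_big /=.
under eq_bigr => a _ do under eq_bigr => b _ do rewrite collapse.
rewrite -{2}(cou_r Hh x) -{2}(cou_r Hh y) !(lin1_sum _ _ (lin1_ant Hh)) mulr_suml exchange_big.
apply: eq_bigr => a _; rewrite mulr_sumr; apply: eq_bigr => b _.
by rewrite !(lin1Z _ _ (lin1_ant Hh)) -scalerAl -scalerAr scalerA mulrC.
Qed.

End Antipode.

Section ModuleAlgebra.
Variables (F : fieldType) (H : algType F) (Hh : cocomm_hopf H) (V : lmodType F)
  (P : poisson_pseudoalg Hh V).
Local Notation cop := (cop Hh).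
Local Notation cou := (cou Hh).
Local Notation ant := (ant Hh).
Local Notation act := (act P).
Local Notation vmul := (vmul P).

Lemma lin1_actl v : lin1 (fun h => act h v).
Proof. by move=> c x y; rewrite act_linl. Qed.

Lemma lin1_actr h : lin1 (act h).
Proof. exact: act_linr. Qed.

Lemma lin1_vmull v : lin1 (fun a => vmul a v).
Proof. exact: vmul_linl. Qed.

Lemma lin1_vmulr v : lin1 (vmul v).
Proof. exact: vmul_linr. Qed.

Local Hint Resolve lin1_actl lin1_actr lin1_vmull lin1_vmulr : lin1db.

Lemma act_cou h v : act (cou h *: 1) v = cou h *: v.
Proof. by rewrite (lin1Z _ _ (lin1_actl v)) act_one. Qed.

Definition equivariant (mu : V -> V -> V) :=
  forall k u v, act k (mu u v) = \sum_(x <- cop k) mu (act x.1 u) (act x.2 v).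

Lemma bilin_vmul : bilin vmul.
Proof. by split => ?; lin. Qed.

Lemma bilin_vmulC : bilin (fun u v => vmul v u).
Proof. by split => ?; lin. Qed.

Lemma equivariant_vmul : equivariant vmul.
Proof. by move=> k u v; rewrite act_vmul. Qed.

Lemma equivariant_vmulC : equivariant (fun u v => vmul v u).
Proof.
move=> k u v; rewrite act_vmul (big_cop_cocomm Hh (G := fun x => vmul (act x.1 v) (act x.2 u))) //.
by bil.
Qed.

Lemma equivariant_actl mu : bilin mu -> equivariant mu -> forall h e w,
  mu (act h e) w = \sum_(x <- cop h) act x.1 (mu e (act (ant x.2) w)).
Proof.
move=> [lin_mul lin_mur] equiv_mu h e w.
under eq_bigr => x _ do rewrite equiv_mu.
rewrite (big_cop_coassoc Hh (G := fun t => mu (act t.1.1 e) (act t.1.2 (act (ant t.2) w))));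
  last by tril.
have cancel_ant (x : H * H) :
    \sum_(y <- cop x.2) mu (act x.1 e) (act y.1 (act (ant y.2) w)) = cou x.2 *: mu (act x.1 e) w.
  rewrite -(lin1_sum _ _ (lin_mur _)) -(lin1Z _ _ (lin_mur _)); congr (mu _ _).
  rewrite -act_cou -ant_r (lin1_sum _ _ (lin1_actl _)).
  by apply: eq_bigr => y _; rewrite act_mul.
under eq_bigr => x _ do rewrite /= cancel_ant -(lin1Z _ _ (lin_mul _)) -(lin1Z _ _ (lin1_actl _)).
by rewrite -(lin1_sum _ _ (lin_mul _)) -(lin1_sum _ _ (lin1_actl _)) cou_r.
Qed.

Lemma vmul_actr h e w :
  vmul w (act h e) = \sum_(x <- cop h) act x.1 (vmul (act (ant x.2) w) e).
Proof. exact: (equivariant_actl bilin_vmulC equivariant_vmulC). Qed.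

(* Insert [cou k_2 = k_2 S(k_3)] next to [c'], move [k_2] across [c] with
   [vmul_actr], and cancel [S(k_1) k_2]. *)
Lemma act_ant_vmul k c c' :
  act (ant k) (vmul c c') = \sum_(x <- cop k) vmul (act (ant x.1) c) (act (ant x.2) c').
Proof.
have insert_counit : act (ant k) (vmul c c') =
    \sum_(x <- cop k) \sum_(z <- cop x.2) act (ant x.1) (vmul c (act (z.1 * ant z.2) c')).
  symmetry.
  under eq_bigr => x _ do rewrite -(lin1_sum _ _ (lin1_actr _)) -(lin1_sum _ _ (lin1_vmulr _))
    -(lin1_sum _ _ (lin1_actl _)) ant_r act_cou (lin1Z _ _ (lin1_vmulr _))
    (lin1Z _ _ (lin1_actr _)) -(lin1Z _ _ (lin1_actl _)) -(lin1Z _ _ (lin1_ant Hh)).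
  by rewrite -(lin1_sum _ _ (lin1_actl _)) -(lin1_sum _ _ (lin1_ant Hh)) cou_r.
rewrite insert_counit.
under eq_bigr => x _ do under eq_bigr => z _ do
  rewrite act_mul vmul_actr (lin1_sum _ _ (lin1_actr _)).
have reassoc_inner (x : H * H) : \sum_(z <- cop x.2) \sum_(i <- cop z.1)
    act (ant x.1) (act i.1 (vmul (act (ant i.2) c) (act (ant z.2) c'))) =
  \sum_(z <- cop x.2) \sum_(i <- cop z.2)
    act (ant x.1 * z.1) (vmul (act (ant i.1) c) (act (ant i.2) c')).
  under eq_bigr => z _ do under eq_bigr => i _ do rewrite -act_mul.
  by rewrite (big_cop_coassoc Hh (G := fun t => act (ant x.1 * t.1.1)
    (vmul (act (ant t.1.2) c) (act (ant t.2) c')))) //; tril.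
under eq_bigr => x _ do rewrite reassoc_inner.
rewrite -(big_cop_coassoc Hh (G := fun t => \sum_(i <- cop t.2)
    act (ant t.1.1 * t.1.2) (vmul (act (ant i.1) c) (act (ant i.2) c')))); last by tril.
under eq_bigr => x _ do rewrite /= exchange_big /=.
under eq_bigr => x _ do under eq_bigr => i _ do
  rewrite -(lin1_sum _ _ (lin1_actl _)) ant_l act_cou.
under eq_bigr => x _ do rewrite -scaler_sumr.
transitivity (\sum_(i <- cop (\sum_(x <- cop k) cou x.1 *: x.2))
    vmul (act (ant i.1) c) (act (ant i.2) c')); last by rewrite cou_l.
rewrite big_cop_sum; last by bil.
by apply: eq_bigr => x _; rewrite big_cop_scale //; bil.
Qed.

End ModuleAlgebra.

Section BalancedForms.
Variables (F : fieldType) (H : algType F) (Hh : cocomm_hopf H) (V : lmodType F)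
  (P : poisson_pseudoalg Hh V).
Local Notation cop := (cop Hh).
Local Notation ant := (ant Hh).
Local Notation act := (act P).
Local Notation vmul := (vmul P).
Local Notation PB := (PB H V).
Local Notation mulPBr := (mulPBr Hh act vmul).
Local Notation mulPBl := (mulPBl Hh act vmul).
Implicit Types (W : lmodType F) (s B : PB).
Local Hint Resolve lin1_actl lin1_actr lin1_vmull lin1_vmulr : lin1db.

(* The [phi] with [pbform phi] are exactly the linear maps out of
   [(H ⊗ H) ⊗_H V], and [eqPB] is equality under all of them. *)
Definition pbform W (phi : H -> H -> V -> W) := trilin phi /\ balanced2 Hh act phi.

Definition evalPB W (phi : H -> H -> V -> W) s := \sum_(x <- s) phi x.1.1 x.1.2 x.2.

Lemma eqPB_eval s (t : PB) : eqPB Hh act s t ->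
  forall W (phi : H -> H -> V -> W), pbform phi -> evalPB phi s = evalPB phi t.
Proof. by move=> eq_st W phi [tril_phi bal_phi]; apply: eq_st. Qed.

Lemma evalPB_cat W (phi : H -> H -> V -> W) s (t : PB) :
  evalPB phi (s ++ t) = evalPB phi s + evalPB phi t.
Proof. exact: big_cat. Qed.

Lemma evalPB_flatten W (phi : H -> H -> V -> W) (L : seq PB) :
  evalPB phi (flatten L) = \sum_(s <- L) evalPB phi s.
Proof. exact: big_flatten. Qed.

Lemma evalPB_scale W (phi : H -> H -> V -> W) c s : trilin phi ->
  evalPB phi (scalePB c s) = c *: evalPB phi s.
Proof.
move=> [_ _ lin_phi3]; rewrite /evalPB big_map scaler_sumr.
by apply: eq_bigr => x _ /=; rewrite (lin1Z _ _ (lin_phi3 _ _)).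
Qed.

Definition flip W (phi : H -> H -> V -> W) f g d := phi g f d.

Lemma pbform_flip W (phi : H -> H -> V -> W) : pbform phi -> pbform (flip phi).
Proof.
move=> [[lin_phi1 lin_phi2 lin_phi3] bal_phi]; split.
  by split=> ? ?; [exact: lin_phi2 | exact: lin_phi1 | exact: lin_phi3].
move=> f g h e; rewrite /flip -bal_phi.
by rewrite (big_cop_cocomm Hh (G := fun x => phi (g * x.2) (f * x.1) e)) //; bil.
Qed.

(* [pullr mu phi c] is [phi] precomposed with [B |-> B c], the product being [mu]. *)
Definition pullr (mu : V -> V -> V) W (phi : H -> H -> V -> W) c f g d :=
  \sum_(y <- cop g) phi f y.1 (mu d (act (ant y.2) c)).

Definition pulll W (phi : H -> H -> V -> W) a f g d :=
  \sum_(y <- cop f) phi y.1 g (vmul (act (ant y.2) a) d).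

Lemma evalPB_mulPBr W (phi : H -> H -> V -> W) B c :
  evalPB phi (mulPBr B c) = evalPB (pullr vmul phi c) B.
Proof. exact: big_allpairs_dep. Qed.

Lemma evalPB_mulPBl W (phi : H -> H -> V -> W) a B :
  evalPB phi (mulPBl a B) = evalPB (pulll phi a) B.
Proof. exact: big_allpairs_dep. Qed.

(* This is where [B c] is shown to be well defined on [(H ⊗ H) ⊗_H V]. *)
Lemma pbform_pullr mu W (phi : H -> H -> V -> W) c :
  bilin mu -> equivariant P mu -> pbform phi -> pbform (pullr mu phi c).
Proof.
move=> bil_mu equiv_mu [[lin_phi1 lin_phi2 lin_phi3] bal_phi].
have [lin_mul lin_mur] := bil_mu.
split; first by rewrite /pullr; split => ? ?; lin.
move=> f g h e; rewrite /pullr.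
have split_cop (x : H * H) :
    \sum_(y <- cop (g * x.2)) phi (f * x.1) y.1 (mu e (act (ant y.2) c)) =
    \sum_(y <- cop g) \sum_(z <- cop x.2)
      phi (f * x.1) (y.1 * z.1) (mu e (act (ant z.2) (act (ant y.2) c))).
  rewrite (big_cop_mul Hh (G := fun y => phi (f * x.1) y.1 (mu e (act (ant y.2) c))));
    last by bil.
  by apply: eq_bigr => y _; apply: eq_bigr => z _; rewrite /= ant_mul act_mul.
under eq_bigr => x _ do rewrite split_cop.
rewrite exchange_big /=; apply: eq_bigr => y _.
rewrite -(big_cop_coassoc Hh (G := fun t => phi (f * t.1.1) (y.1 * t.1.2)
   (mu e (act (ant t.2) (act (ant y.2) c))))); last by tril.
rewrite (equivariant_actl bil_mu equiv_mu) (lin1_sum _ _ (lin_phi3 _ _)).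
by apply: eq_bigr => x _; rewrite -bal_phi.
Qed.

Lemma pbform_pullr_vmul W (phi : H -> H -> V -> W) c : pbform phi -> pbform (pullr vmul phi c).
Proof. exact/pbform_pullr/equivariant_vmul/bilin_vmul. Qed.

Lemma pbform_pulll W (phi : H -> H -> V -> W) a : pbform phi -> pbform (pulll phi a).
Proof.
move=> form_phi; rewrite [pulll _ _](_ : _ = flip (pullr (fun u v => vmul v u) (flip phi) a)) //.
apply/pbform_flip/pbform_pullr/pbform_flip => //; [exact: bilin_vmulC | exact: equivariant_vmulC].
Qed.

Definition opullr W (phi : H -> H -> V -> W) (o : option V) :=
  if o is Some c then pullr vmul phi c else phi.

Definition opulll W (phi : H -> H -> V -> W) (o : option V) :=
  if o is Some a then pulll phi a else phi.

Lemma evalPB_omulPBr W (phi : H -> H -> V -> W) B o :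
  evalPB phi (omulPBr P B o) = evalPB (opullr phi o) B.
Proof. by case: o => [c|] //=; rewrite evalPB_mulPBr. Qed.

Lemma evalPB_omulPBl W (phi : H -> H -> V -> W) B o :
  evalPB phi (omulPBl P o B) = evalPB (opulll phi o) B.
Proof. by case: o => [a|] //=; rewrite evalPB_mulPBl. Qed.

Lemma pbform_opullr W (phi : H -> H -> V -> W) o : pbform phi -> pbform (opullr phi o).
Proof. by case: o => [c|] //=; apply: pbform_pullr_vmul. Qed.

Lemma pbform_opulll W (phi : H -> H -> V -> W) o : pbform phi -> pbform (opulll phi o).
Proof. by case: o => [a|] //=; apply: pbform_pulll. Qed.

Lemma mulPBrA W (phi : H -> H -> V -> W) B c c' : trilin phi ->
  evalPB phi (mulPBr (mulPBr B c) c') = evalPB phi (mulPBr B (vmul c c')).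
Proof.
move=> [lin_phi1 lin_phi2 lin_phi3]; rewrite !evalPB_mulPBr; apply: eq_bigr => x _; rewrite /pullr.
under [RHS]eq_bigr => y _ do
  rewrite act_ant_vmul (lin1_sum _ _ (lin1_vmulr P _)) (lin1_sum _ _ (lin_phi3 _ _)).
rewrite (big_cop_coassoc Hh (G := fun t => phi x.1.1 t.1.1
  (vmul (vmul x.2 (act (ant t.2) c)) (act (ant t.1.2) c')))); last by tril.
apply: eq_bigr => y _ /=.
rewrite (big_cop_cocomm Hh (G := fun z => phi x.1.1 y.1
  (vmul (vmul x.2 (act (ant z.2) c)) (act (ant z.1) c')))); last by bil.
by apply: eq_bigr => z _; rewrite vmulA.
Qed.

Definition omul (o : option V) y := if o is Some c then vmul c y else y.

Lemma omulPBrA W (phi : H -> H -> V -> W) B o y : trilin phi ->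
  evalPB phi (mulPBr (omulPBr P B o) y) = evalPB phi (mulPBr B (omul o y)).
Proof. by case: o => [c|] //= tril_phi; rewrite mulPBrA. Qed.

Lemma mulPBlrA W (phi : H -> H -> V -> W) a B c :
  evalPB phi (mulPBl a (mulPBr B c)) = evalPB phi (mulPBr (mulPBl a B) c).
Proof.
rewrite evalPB_mulPBl !evalPB_mulPBr evalPB_mulPBl.
apply: eq_bigr => x _; rewrite /pullr /pulll exchange_big /=.
by apply: eq_bigr => w _; apply: eq_bigr => y _; rewrite vmulA.
Qed.

Lemma omulPBlrA W (phi : H -> H -> V -> W) o B o' :
  evalPB phi (omulPBl P o (omulPBr P B o')) = evalPB phi (omulPBr P (omulPBl P o B) o').
Proof. by case: o => [a|]; case: o' => [c|] //=; rewrite mulPBlrA. Qed.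

(* The empty product [None] counts as even. *)
Definition ovpar (p : bool) (o : option V) := if o is Some c then vpar P p c else p = false.

Lemma evalPB_opullr_flip W (phi : H -> H -> V -> W) s r p o : trilin phi ->
  (forall x, x \in s -> vpar P r x.2) -> ovpar p o ->
  evalPB (opullr (flip phi) o) s = sgn F r p *: evalPB (flip (opulll phi o)) s.
Proof.
move=> [_ _ lin_phi3] par_s; case: o => [c|] /= par_c; last first.
  by rewrite par_c /sgn andbF expr0 scale1r.
rewrite /evalPB scaler_sumr big_seq [RHS]big_seq; apply: eq_bigr => x /par_s par_x.
rewrite /pullr /flip /pulll scaler_sumr; apply: eq_bigr => y _.
by rewrite (vmul_scomm par_x (act_par _ par_c)) (lin1Z _ _ (lin_phi3 _ _)).
Qed.

Lemma evalPB_pbr_skew p q a b W (phi : H -> H -> V -> W) :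
  vpar P p a -> vpar P q b -> pbform phi ->
  evalPB phi (pbr P b a) = - sgn F p q *: evalPB (flip phi) (pbr P a b).
Proof.
move=> par_a par_b form_phi; rewrite (eqPB_eval (pbr_skew par_a par_b) form_phi).
rewrite /evalPB big_map scaler_sumr; case: form_phi => [[_ _ lin_phi3] _].
by apply: eq_bigr => x _; rewrite /flip /= (lin1Z _ _ (lin_phi3 _ _)).
Qed.

Lemma evalPB_pbr_leibniz p q a b c W (phi : H -> H -> V -> W) :
  vpar P p b -> vpar P q c -> pbform phi ->
  evalPB phi (pbr P a (vmul b c)) =
  evalPB phi (mulPBr (pbr P a b) c) + sgn F p q *: evalPB phi (mulPBr (pbr P a c) b).
Proof.
move=> par_b par_c form_phi.
rewrite (eqPB_eval (pbr_leibniz a par_b par_c) form_phi) evalPB_cat evalPB_scale //.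
by case: form_phi.
Qed.

End BalancedForms.

(* The four signs met in [evalPB_pbr_prodl]: skew-symmetry for the whole product,
   the right expansion, moving the cofactor across [[y * a_i]], and
   skew-symmetry for [a_i]. *)
Lemma sgn_left_expansion (F : fieldType) (q p : bool) (x y : nat) :
  - sgn F q (odd (x + p + y)) *
    ((-1) ^+ (p * x)%N * (sgn F (q (+) p) (odd (x + y)) * - sgn F p q))
  = (-1) ^+ (p * y)%N.
Proof.
rewrite !oddD oddb /sgn -[(-1) ^+ (p * x)%N]signr_odd -[(-1) ^+ (p * y)%N]signr_odd.
rewrite !oddM oddb; move: (odd x) (odd y) => x2 y2.
by case: p; case: q; case: x2; case: y2; cbv [addb andb negb nat_of_bool];
  rewrite ?expr0 ?expr1 ?mulN1r ?mulrN ?mulNr ?mul1r ?mulr1 ?opprK.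
Qed.

Lemma sgn_mulnE (F : fieldType) (p : bool) n : (-1) ^+ (p * n)%N = sgn F (odd n) p.
Proof. by rewrite /sgn -signr_odd oddM oddb andbC. Qed.

Lemma iota0S n : iota 0 n.+1 = rcons (iota 0 n) n.
Proof. by rewrite -addn1 iotaD add0n cats1. Qed.

Lemma filter_iota_neq_ge n j : (n <= j)%N -> [seq k <- iota 0 n | k != j] = iota 0 n.
Proof.
move=> le_nj; apply/all_filterP/allP => k; rewrite mem_iota => /andP[_ lt_kn].
by apply: contra_ltnN (leq_trans lt_kn le_nj) => /eqP ->.
Qed.

Lemma filter_iota_neq m i : (i < m)%N ->
  [seq k <- iota 0 m | k != i] = iota 0 i ++ iota i.+1 (m - i.+1).
Proof.
move=> lt_im; have -> : m = i + (m - i.+1).+1 by lia.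
rewrite iotaD add0n /= filter_cat /= eqxx filter_iota_neq_ge //.
have -> : (i + (m - i.+1).+1 - i.+1 = m - i.+1)%N by lia.
congr (_ ++ _); apply/all_filterP/allP => k; rewrite mem_iota => /andP[lt_ik _].
by apply: contra_ltnN lt_ik => /eqP ->.
Qed.

Section Products.
Variables (F : fieldType) (H : algType F) (Hh : cocomm_hopf H) (V : lmodType F)
  (P : poisson_pseudoalg Hh V).
Local Notation vmul := (vmul P).
Implicit Types (W : lmodType F) (x y : V).

Definition prodn (b : nat -> V) n := odflt 0 (lprod P [seq b k | k <- iota 0 n]).

Definition prodn_but (b : nat -> V) n j := lprod P [seq b k | k <- iota 0 n & k != j].

Lemma lprod_rcons s y : lprod P (rcons s y) = Some (omul P (lprod P s) y).
Proof. by case: s => [|x s] //=; rewrite foldl_rcons. Qed.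

Lemma ovpar_lprod (b : nat -> V) (pb : nat -> bool) (s : seq nat) :
  (forall k, k \in s -> vpar P (pb k) (b k)) ->
  ovpar P (odd (\sum_(k <- s) pb k)) (lprod P (map b s)).
Proof.
elim/last_ind: s => [|s x IHs] par_b; first by rewrite big_nil.
rewrite map_rcons lprod_rcons /= big_rcons /= oddD oddb.
have par_x : vpar P (pb x) (b x) by apply: par_b; rewrite mem_rcons mem_head.
have /IHs : forall k, k \in s -> vpar P (pb k) (b k).
  by move=> k s_k; apply: par_b; rewrite mem_rcons in_cons s_k orbT.
case: (lprod P (map b s)) => [c|] /= par_c; first exact: vmul_par par_c par_x.
by rewrite par_c.
Qed.

Lemma lprod_iota (b : nat -> V) n : (0 < n)%N ->
  lprod P [seq b k | k <- iota 0 n] = Some (prodn b n).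
Proof. by case: n. Qed.

Lemma prodnS b n : (0 < n)%N -> prodn b n.+1 = vmul (prodn b n) (b n).
Proof. by move=> n_gt0; rewrite {1}/prodn iota0S map_rcons lprod_rcons lprod_iota. Qed.

Lemma prodn_butS b n j : (j < n)%N -> prodn_but b n.+1 j = Some (omul P (prodn_but b n j) (b n)).
Proof.
move=> lt_jn; rewrite /prodn_but iota0S filter_rcons.
by rewrite eq_sym ltn_eqF // map_rcons lprod_rcons.
Qed.

Lemma prodn_but_last b n : prodn_but b n.+1 n = lprod P [seq b k | k <- iota 0 n].
Proof. by rewrite /prodn_but iota0S filter_rcons eqxx filter_iota_neq_ge. Qed.

Lemma vpar_prodn (b : nat -> V) (pb : nat -> bool) n : (0 < n)%N ->
  (forall k, (k < n)%N -> vpar P (pb k) (b k)) ->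
  vpar P (odd (\sum_(0 <= k < n) pb k)) (prodn b n).
Proof.
move=> n_gt0 par_b; have := @ovpar_lprod b pb (iota 0 n).
rewrite lprod_iota // /index_iota subn0; apply=> k; rewrite mem_iota => /andP[_ lt_kn].
exact: par_b.
Qed.

Lemma evalPB_pbr_prodr (b : nat -> V) (pb : nat -> bool) n x : (0 < n)%N ->
  (forall k, (k < n)%N -> vpar P (pb k) (b k)) ->
  forall W (phi : H -> H -> V -> W), pbform P phi ->
  evalPB phi (pbr P x (prodn b n)) = \sum_(0 <= j < n)
    (-1) ^+ (pb j * \sum_(0 <= k < j) pb k)%N *:
      evalPB phi (omulPBr P (pbr P x (b j)) (prodn_but b n j)).
Proof.
elim: n => [//|n IHn] _ par_b W phi form_phi.
have [->|n_gt0] := posnP n.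
  by rewrite big_nat1 /prodn_but /= big_geq // muln0 expr0 scale1r.
have par_b' k : (k < n)%N -> vpar P (pb k) (b k) by move=> lt_kn; apply/par_b/ltnW.
rewrite prodnS // (evalPB_pbr_leibniz x (vpar_prodn n_gt0 par_b') (par_b n (ltnSn n)) form_phi).
rewrite big_nat_recr //=; congr (_ + _).
  rewrite evalPB_mulPBr (IHn n_gt0 par_b' _ _ (pbform_pullr_vmul _ form_phi)).
  apply: eq_big_nat => j /andP[_ lt_jn].
  by rewrite -evalPB_mulPBr omulPBrA ?prodn_butS //; case: form_phi.
by rewrite prodn_but_last lprod_iota //= sgn_mulnE.
Qed.

Lemma evalPB_pbr_prodl (a : nat -> V) (pa : nat -> bool) m y q : (0 < m)%N ->
  (forall k, (k < m)%N -> vpar P (pa k) (a k)) -> vpar P q y ->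
  forall W (phi : H -> H -> V -> W), pbform P phi ->
  evalPB phi (pbr P (prodn a m) y) = \sum_(0 <= i < m)
    (-1) ^+ (pa i * \sum_(i.+1 <= k < m) pa k)%N *:
      evalPB phi (omulPBl P (prodn_but a m i) (pbr P (a i) y)).
Proof.
move=> m_gt0 par_a par_y W phi form_phi.
have form_flip := pbform_flip form_phi.
rewrite (evalPB_pbr_skew par_y (vpar_prodn m_gt0 par_a) form_phi).
rewrite (evalPB_pbr_prodr _ m_gt0 par_a form_flip) scaler_sumr.
apply: eq_big_nat => i /andP[_ lt_im].
have [s [eq_s par_s]] := pbr_par par_y (par_a i lt_im).
have par_cofactor : ovpar P (odd (\sum_(k <- [seq k <- iota 0 m | k != i]) pa k))
                            (prodn_but a m i).
  apply: ovpar_lprod => k; rewrite mem_filter mem_iota => /andP[_ /andP[_ lt_km]].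
  exact: par_a.
have form_l := pbform_opulll (prodn_but a m i) form_phi.
rewrite evalPB_omulPBr (eqPB_eval eq_s (pbform_opullr _ form_flip)).
rewrite (evalPB_opullr_flip form_phi.1 par_s par_cofactor).
rewrite -(eqPB_eval eq_s (pbform_flip form_l)).
rewrite (evalPB_pbr_skew (par_a i lt_im) par_y (pbform_flip form_l)) -evalPB_omulPBl.
rewrite !scalerA; congr (_ *: _).
rewrite filter_iota_neq // big_cat /= (big_cat_nat _ (n := i)) //= ?(ltnW lt_im) //.
rewrite (@big_ltn _ _ _ i m _ lt_im) /index_iota subn0 addnA -!mulrA.
exact: sgn_left_expansion.
Qed.

End Products.

Section OrdinalsAsNaturals.
Variable n : nat.
Implicit Types (T : Type) (R : nmodType).

Lemma map_enum_inord T (f : 'I_n.+1 -> T) :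
  [seq f k | k <- enum 'I_n.+1] = [seq f (inord k) | k <- iota 0 n.+1].
Proof. by rewrite -val_enum_ord -map_comp; apply: eq_map => k /=; rewrite inord_val. Qed.

Lemma map_filter_enum_inord T (f : 'I_n.+1 -> T) (i : 'I_n.+1) :
  [seq f k | k <- enum 'I_n.+1 & k != i] =
  [seq f (inord k) | k <- iota 0 n.+1 & k != i :> nat].
Proof.
rewrite -val_enum_ord filter_map -map_comp.
by apply: eq_map => k /=; rewrite inord_val.
Qed.

Lemma big_enum_inord R (G : 'I_n.+1 -> R) :
  \sum_(i <- enum 'I_n.+1) G i = \sum_(0 <= k < n.+1) G (inord k).
Proof.
by rewrite /index_iota subn0 -val_enum_ord [RHS]big_map; apply: eq_bigr => i _; rewrite inord_val.
Qed.

Lemma big_ord_gt_inord R (G : 'I_n.+1 -> R) i :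
  \sum_(k < n.+1 | (i < k)%N) G k = \sum_(i.+1 <= k < n.+1) G (inord k).
Proof. by rewrite big_geq_mkord; apply: eq_big => // k _; rewrite inord_val. Qed.

Lemma big_ord_lt_inord R (G : 'I_n.+1 -> R) j : (j <= n.+1)%N ->
  \sum_(k < n.+1 | (k < j)%N) G k = \sum_(0 <= k < j) G (inord k).
Proof.
move=> le_jn; rewrite (big_nat_widen _ _ _ _ _ le_jn) big_mkord.
by apply: eq_big => // k _; rewrite inord_val.
Qed.

End OrdinalsAsNaturals.

Unset Implicit Arguments.

Theorem proposition4p9 (F : fieldType) (charF : [pchar F] =i pred0)
  (H : algType F) (Hh : cocomm_hopf H) (V : lmodType F) (P : poisson_pseudoalg Hh V)
  (m n : nat) (a : 'I_m -> V) (pa : 'I_m -> bool) (b : 'I_n -> V) (pb : 'I_n -> bool) :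
  (0 < m)%N -> (0 < n)%N ->
  (forall i, vpar P (pa i) (a i)) -> (forall j, vpar P (pb j) (b j)) ->
  eqPB Hh (act P) (pbr P (prodI P a) (prodI P b)) (rhs49 P a pa b pb).
Proof.
case: m a pa => [//|m] a pa; case: n b pb => [//|n] b pb m_gt0 n_gt0 par_a par_b.
have par_a' k : (k < m.+1)%N -> vpar P (pa (inord k)) (a (inord k)) by move=> _.
have par_b' k : (k < n.+1)%N -> vpar P (pb (inord k)) (b (inord k)) by move=> _.
move=> W phi tril_phi bal_phi; have form_phi : pbform P phi by [].
change (evalPB phi (pbr P (prodI P a) (prodI P b)) = evalPB phi (rhs49 P a pa b pb)).
rewrite /prodI !map_enum_inord -!/(prodn P _ _).
rewrite (evalPB_pbr_prodl m_gt0 par_a' (vpar_prodn n_gt0 par_b') form_phi).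
rewrite /rhs49 evalPB_flatten big_allpairs_dep big_enum_inord.
apply: eq_big_nat => i /andP[_ lt_im].
rewrite evalPB_omulPBl (evalPB_pbr_prodr _ n_gt0 par_b' (pbform_opulll _ form_phi)).
rewrite scaler_sumr big_enum_inord; apply: eq_big_nat => j /andP[_ lt_jn].
rewrite -evalPB_omulPBl omulPBlrA evalPB_scale // scalerA /eps_ij exprD.
rewrite !map_filter_enum_inord !inordK // big_ord_gt_inord big_ord_lt_inord //.
exact: ltnW.
Qed.
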